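(* Let $M:\mathcal{T}\to\mathcal{Q}$ be a morphism of algebraic theories. The following are equivalent: (1) $M$ is a Lawvere covariety, i.e. a general cosolution in $\mathbf{AlgTh}$ of some cosystem of Lawvere equations; (2) $M$ is isomorphic to the canonical morphism $\mathcal{T}\to\mathcal{T}/{\sim}$ for some congruence $\sim$ on $\mathcal{T}$ (i.e. $M=N\circ C$ with $C:\mathcal{T}\to\mathcal{T}/{\sim}$ canonical and $N$ an isomorphism of theories); (3) $M$ is a coequalizer in $\mathbf{AlgTh}$ of some reflexive pair $P,Q$ forming a Lawvere equation.
   Context: An algebraic theory is a small category with finite products; $\mathbf{AlgTh}$ is the category of algebraic theories with finite-product-preserving functors (morphisms of theories) as morphisms. An equation $f\approx g$ is a pair of parallel morphisms. A cosystem of equations is a non-empty set of equations with a common codomain $A$. A cosolution is a morphism $a$ with domain $A$ with $af=ag$ for all $f\approx g$ in the cosystem; a general cosolution is a cosolution $v$ such that every cosolution $a$ factors uniquely as $a=\tilde a v$. A Lawvere equation is an equation $P\approx Q$ in $\mathbf{AlgTh}$ ($P,Q:\mathcal{T}'\to\mathcal{T}$) such that there exists a morphism of theories $U:\mathcal{T}''\to\mathcal{T}'$ which is surjective on objects and satisfies $PU=QU$. A pair $P,Q:\mathcal{T}'\to\mathcal{T}$ is reflexive if there is a morphism of theories $S:\mathcal{T}\to\mathcal{T}'$ with $PS=QS=1_{\mathcal{T}}$. A congruence on an algebraic theory $\mathcal{T}$ is an equivalence relation $\sim$ on the morphisms of $\mathcal{T}$ relating only parallel morphisms, compatible with composition (if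 $f\sim f'$, $g\sim g'$ and $gf$ is defined then $gf\sim g'f'$) and with finite products (if $f_i\sim g_i:X\to Y_i$ for $i=1,\dots,n$ then $\langle f_1,\dots,f_n\rangle\sim\langle g_1,\dots,g_n\rangle$). $\mathcal{T}/{\sim}$ has the same objects as $\mathcal{T}$ and $\sim$-classes of morphisms as morphisms; the canonical morphism $\mathcal{T}\to\mathcal{T}/{\sim}$ is the identity on objects and sends a morphism to its class. *)

From Stdlib Require Import FunctionalExtensionality PropExtensionality
  ProofIrrelevance IndefiniteDescription.
From mathcomp Require Import all_boot.

Set Implicit Arguments.
Unset Strict Implicit.
Unset Printing Implicit Defensive.

Record Cat := MkCat {
  ob : Type;
  hom : ob -> ob -> Type;
  cmp : forall x y z, hom y z -> hom x y -> hom x z;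
  idm : forall x, hom x x;
  cmpA : forall x y z w (h : hom z w) (g : hom y z) (f : hom x y),
      cmp (cmp h g) f = cmp h (cmp g f);
  cmp1l : forall x y (f : hom x y), cmp (idm y) f = f;
  cmp1r : forall x y (f : hom x y), cmp f (idm x) = f }.
Arguments ob : clear implicits.
Arguments hom : clear implicits.
Arguments cmp {c x y z}.
Arguments idm {c}.

Definition is_prod (C : Cat) (n : nat) (Y : 'I_n -> ob C) (P : ob C)
    (p : forall i, hom C P (Y i)) : Prop :=
  forall (X : ob C) (f : forall i, hom C X (Y i)),
    exists! h : hom C X P, forall i, cmp (p i) h = f i.

Arguments is_prod {C n} Y P p.

Definition has_finite_products (C : Cat) : Prop :=
  forall (n : nat) (Y : 'I_n -> ob C),
    exists (P : ob C) (p : forall i, hom C P (Y i)), is_prod Y P p.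

Record Theory := MkTheory { th_cat :> Cat; th_prod : has_finite_products th_cat }.

Record Functor (C D : Cat) := MkFunctor {
  fobj :> ob C -> ob D;
  fmap : forall x y, hom C x y -> hom D (fobj x) (fobj y);
  fmap_id : forall x, fmap (idm x) = idm (fobj x);
  fmap_cmp : forall x y z (g : hom C y z) (f : hom C x y),
      fmap (cmp g f) = cmp (fmap g) (fmap f) }.
Arguments fmap {C D} f {x y} _ : rename.

Definition preserves_products (C D : Cat) (F : Functor C D) : Prop :=
  forall (n : nat) (Y : 'I_n -> ob C) (P : ob C) (p : forall i, hom C P (Y i)),
    is_prod Y P p -> is_prod (fun i => F (Y i)) (F P) (fun i => fmap F (p i)).

Lemma fcomp_id (C D E : Cat) (G : Functor D E) (F : Functor C D) x :
  fmap G (fmap F (idm x)) = idm (G (F x)).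
Proof. by rewrite fmap_id fmap_id. Qed.

Lemma fcomp_cmp (C D E : Cat) (G : Functor D E) (F : Functor C D)
  x y z (g : hom C y z) (f : hom C x y) :
  fmap G (fmap F (cmp g f)) = cmp (fmap G (fmap F g)) (fmap G (fmap F f)).
Proof. by rewrite fmap_cmp fmap_cmp. Qed.

Definition fcomp (C D E : Cat) (G : Functor D E) (F : Functor C D) : Functor C E :=
  @MkFunctor C E (fun x => G (F x)) (fun x y f => fmap G (fmap F f))
    (@fcomp_id C D E G F) (@fcomp_cmp C D E G F).

Definition fid (C : Cat) : Functor C C :=
  @MkFunctor C C (fun x => x) (fun x y f => f) (fun x => erefl) (fun _ _ _ _ _ => erefl).

Record TheoryMor (T T' : Theory) := MkTheoryMor {
  tfun :> Functor T T';
  tpres : preserves_products tfun }.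

Lemma preserves_comp (C D E : Cat) (G : Functor D E) (F : Functor C D) :
  preserves_products G -> preserves_products F -> preserves_products (fcomp G F).
Proof. move=> hG hF n Y P p hp; exact: (hG _ _ _ _ (hF _ _ _ _ hp)). Qed.


Definition tcomp (T1 T2 T3 : Theory) (G : TheoryMor T2 T3) (F : TheoryMor T1 T2) :
  TheoryMor T1 T3 := @MkTheoryMor T1 T3 (fcomp G F) (@preserves_comp T1 T2 T3 G F (@tpres T2 T3 G) (@tpres T1 T2 F)).

Lemma preserves_id (C : Cat) : preserves_products (fid C).
Proof. by move=> n Y P p hp. Qed.

Definition tid (T : Theory) : TheoryMor T T := @MkTheoryMor T T (fid T) (@preserves_id T).

Definition lawvere_equation (T' T : Theory) (P Q : TheoryMor T' T) : Prop :=
  exists (T'' : Theory) (U : TheoryMor T'' T'),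
    (forall y : ob T', exists x : ob T'', U x = y) /\ tcomp P U = tcomp Q U.

Definition reflexive_pair (T' T : Theory) (P Q : TheoryMor T' T) : Prop :=
  exists S : TheoryMor T T', tcomp P S = tid T /\ tcomp Q S = tid T.

Record Cosystem (A : Theory) := MkCosystem {
  cs_idx : Type;
  cs_nonempty : inhabited cs_idx;
  cs_dom : cs_idx -> Theory;
  cs_lhs : forall i, TheoryMor (cs_dom i) A;
  cs_rhs : forall i, TheoryMor (cs_dom i) A }.
Arguments cs_dom {A} c i.
Arguments cs_lhs {A} c i.
Arguments cs_rhs {A} c i.

Definition cosolution (A B : Theory) (S : Cosystem A) (a : TheoryMor A B) : Prop :=
  forall i, tcomp a (cs_lhs S i) = tcomp a (cs_rhs S i).

Definition general_cosolution (A V : Theory) (S : Cosystem A) (v : TheoryMor A V)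
  : Prop :=
  cosolution S v /\
  forall (B : Theory) (a : TheoryMor A B), cosolution S a ->
    exists! a' : TheoryMor V B, a = tcomp a' v.

Definition lawvere_covariety (T Q : Theory) (M : TheoryMor T Q) : Prop :=
  exists S : Cosystem T,
    (forall i, lawvere_equation (cs_lhs S i) (cs_rhs S i)) /\ general_cosolution S M.

Definition coequalizer (T' T V : Theory) (P Q : TheoryMor T' T) (M : TheoryMor T V)
  : Prop :=
  tcomp M P = tcomp M Q /\
  forall (B : Theory) (a : TheoryMor T B), tcomp a P = tcomp a Q ->
    exists! a' : TheoryMor V B, a = tcomp a' M.

Record congruence (C : Cat) := MkCongruence {
  crel :> forall x y, hom C x y -> hom C x y -> Prop;
  crefl : forall x y (f : hom C x y), crel f f;
  csym : forall x y (f g : hom C x y), crel f g -> crel g f;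
  ctrans : forall x y (f g h : hom C x y), crel f g -> crel g h -> crel f h;
  ccmp : forall x y z (f f' : hom C x y) (g g' : hom C y z),
      crel f f' -> crel g g' -> crel (cmp g f) (cmp g' f');
  cprod : forall (n : nat) (Y : 'I_n -> ob C) (P : ob C)
      (p : forall i, hom C P (Y i)), is_prod Y P p ->
      forall (X : ob C) (f g : forall i, hom C X (Y i)) (hf hg : hom C X P),
      (forall i, crel (f i) (g i)) ->
      (forall i, cmp (p i) hf = f i) -> (forall i, cmp (p i) hg = g i) ->
      crel hf hg }.
Arguments crel {C} c {x y}.

Section Quotient.
Variables (C : Cat) (R : congruence C).

(* morphisms of C/~ : ~-classes *)
Definition qhom (x y : ob C) : Type :=
  {K : hom C x y -> Prop | exists f : hom C x y, K = R _ _ f}.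

Definition qcl (x y : ob C) (f : hom C x y) : qhom x y :=
  exist _ (R _ _ f) (ex_intro _ f erefl).

Lemma qcl_eq (x y : ob C) (f g : hom C x y) : R _ _ f g -> qcl f = qcl g.
Proof.
move=> hfg; apply: eq_sig_hprop => [K|/=]; first exact: proof_irrelevance.
apply: functional_extensionality => h; apply: propositional_extensionality.
split=> H.
- exact: ctrans (csym hfg) H.
- exact: ctrans hfg H.
Qed.

Definition qrep (x y : ob C) (K : qhom x y) : hom C x y :=
  proj1_sig (constructive_indefinite_description _ (proj2_sig K)).

Lemma qrepK (x y : ob C) (K : qhom x y) : qcl (qrep K) = K.
Proof.
rewrite /qrep; case: constructive_indefinite_description => f hf /=.
apply: eq_sig_hprop => [L|/=]; first exact: proof_irrelevance.
by rewrite hf.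
Qed.

Lemma qrep_rel (x y : ob C) (f : hom C x y) : R _ _ (qrep (qcl f)) f.
Proof.
rewrite /qrep; case: constructive_indefinite_description => g /= hg.
have : R _ _ f g by rewrite hg; exact: crefl.
exact: csym.
Qed.

Definition qcmp (x y z : ob C) (g : qhom y z) (f : qhom x y) : qhom x z :=
  qcl (cmp (qrep g) (qrep f)).

Lemma qcmp_cl (x y z : ob C) (g : hom C y z) (f : hom C x y) :
  qcmp (qcl g) (qcl f) = qcl (cmp g f).
Proof. apply: qcl_eq; apply: ccmp; exact: qrep_rel. Qed.

Lemma qcmpA (x y z w : ob C) (h : qhom z w) (g : qhom y z) (f : qhom x y) :
  qcmp (qcmp h g) f = qcmp h (qcmp g f).
Proof.
rewrite -(qrepK h) -(qrepK g) -(qrepK f) !qcmp_cl.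
by rewrite cmpA.
Qed.

Lemma qcmp1l (x y : ob C) (f : qhom x y) : qcmp (qcl (idm y)) f = f.
Proof. by rewrite -(qrepK f) qcmp_cl cmp1l. Qed.

Lemma qcmp1r (x y : ob C) (f : qhom x y) : qcmp f (qcl (idm x)) = f.
Proof. by rewrite -(qrepK f) qcmp_cl cmp1r. Qed.

Definition quot_cat : Cat :=
  @MkCat (ob C) qhom qcmp (fun x => qcl (idm x)) qcmpA qcmp1l qcmp1r.

Definition quot_functor : Functor C quot_cat :=
  @MkFunctor C quot_cat (fun x => x) (fun x y f => qcl f)
    (fun x => erefl) (fun x y z g f => esym (qcmp_cl g f)).

End Quotient.

(* N : T' -> T is an isomorphism of theories (iso in AlgTh); stated for the
   underlying categories so that it applies to the quotient category T/~. *)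
Definition theory_iso (C D : Cat) (N : Functor C D) : Prop :=
  preserves_products N /\
  exists G : Functor D C,
    preserves_products G /\ fcomp G N = fid C /\ fcomp N G = fid D.

(* The kernel of a morphism of theories M (f ~ g iff M f = M g) is a
   congruence, and M factors as the canonical quotient T -> T/ker M followed
   by a faithful N.  A Lawvere equation P = Q is split by a morphism that is
   surjective on objects, so P and Q agree on objects; hence if M P = M Q then
   the quotient by ker M also coequalizes P and Q.  When M is a general
   cosolution, it therefore factors through T/ker M, and that factorization
   is inverse to N.  Conversely, M = N o (T -> T/~) with N invertible is the
   coequalizer of the projections of the kernel pair of M (the theory of
   pairs (f, g) with M f = M g); the diagonal T -> kernel pair splits both
   projections, so they form a reflexive Lawvere pair.  Finally a coequalizer
   of a Lawvere equation is the general cosolution of a one-equation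
   cosystem. *)
From Stdlib Require Import FunctionalExtensionality ProofIrrelevance JMeq.
From mathcomp Require Import all_boot.

Set Implicit Arguments.
Unset Strict Implicit.
Unset Printing Implicit Defensive.

Lemma functor_ext (C D : Cat) (F G : Functor C D) :
  fobj F = fobj G -> (forall x y (f : hom C x y), JMeq (fmap F f) (fmap G f)) ->
  F = G.
Proof.
case: F G => [o m p q] [o' m' p' q'] /= eo; subst o' => em.
have em' : m = m'.
  do 2![apply: functional_extensionality_dep => ?].
  by apply: functional_extensionality => f; apply: JMeq_eq.
subst m'; by rewrite (proof_irrelevance _ p p') (proof_irrelevance _ q q').
Qed.

Lemma fmap_JMeq (C D : Cat) (F G : Functor C D) :
  F = G -> forall x y (f : hom C x y), JMeq (fmap F f) (fmap G f).
Proof. by move=> ->. Qed.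

Lemma tfun_inj (T T' : Theory) (F G : TheoryMor T T') : tfun F = tfun G -> F = G.
Proof.
case: F G => [F pF] [G pG] /= eFG; subst G.
by rewrite (proof_irrelevance _ pF pG).
Qed.

Lemma fcompA (A B C D : Cat) (H : Functor C D) (G : Functor B C) (F : Functor A B) :
  fcomp (fcomp H G) F = fcomp H (fcomp G F).
Proof. exact: functor_ext. Qed.

Lemma fcomp_idl (C D : Cat) (F : Functor C D) : fcomp (fid D) F = F.
Proof. exact: functor_ext. Qed.

Lemma fcomp_idr (C D : Cat) (F : Functor C D) : fcomp F (fid C) = F.
Proof. exact: functor_ext. Qed.

Lemma tcompA (A B C D : Theory) (H : TheoryMor C D) (G : TheoryMor B C)
  (F : TheoryMor A B) : tcomp (tcomp H G) F = tcomp H (tcomp G F).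
Proof. exact/tfun_inj/fcompA. Qed.

Lemma tcomp_idl (C D : Theory) (F : TheoryMor C D) : tcomp (tid D) F = F.
Proof. exact/tfun_inj/fcomp_idl. Qed.

(* Two products of the same family are related by mutually inverse maps
   [u] and [v], so an image of one product under F is also one of the other. *)
Lemma is_prod_transfer (C D : Cat) (F : Functor C D) n (Y : 'I_n -> ob C)
    P0 p0 P p :
  is_prod Y P0 p0 -> is_prod (fun i => F (Y i)) (F P0) (fun i => fmap F (p0 i)) ->
  is_prod Y P p -> is_prod (fun i => F (Y i)) (F P) (fun i => fmap F (p i)).
Proof.
move=> prodP0 FprodP0 prodP X f.
have [u [pu _]] := prodP0 P p.
have [v [pv _]] := prodP P0 p0.
have vu : cmp v u = idm P.
  have [w [_ uniq]] := prodP P p.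
  have vuP i : cmp (p i) (cmp v u) = p i by rewrite -cmpA pv pu.
  have idP i : cmp (p i) (idm P) = p i by rewrite cmp1r.
  by rewrite -(uniq _ vuP) (uniq _ idP).
have [h [ph uniqh]] := FprodP0 X f.
exists (cmp (fmap F v) h); split=> [i|h' ph'].
  by rewrite -cmpA -fmap_cmp pv ph.
have -> : h = cmp (fmap F u) h'.
  by apply: uniqh => i; rewrite -cmpA -fmap_cmp pu ph'.
by rewrite -cmpA -fmap_cmp vu fmap_id cmp1l.
Qed.

Lemma preserves_products_of_some (C D : Cat) (F : Functor C D) :
  (forall n (Y : 'I_n -> ob C), exists P0 p0, is_prod Y P0 p0 /\
     is_prod (fun i => F (Y i)) (F P0) (fun i => fmap F (p0 i))) ->
  preserves_products F.
Proof.
move=> prod_some n Y P p prodP.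
have [P0 [p0 [prodP0 FprodP0]]] := prod_some n Y.
exact: is_prod_transfer FprodP0 prodP.
Qed.

Section QuotientTheory.
Variables (T : Theory) (R : congruence T).

Lemma quot_is_prod n (Y : 'I_n -> ob T) P p :
  is_prod Y P p -> is_prod (C := quot_cat R) Y P (fun i => qcl R (p i)).
Proof.
move=> prodP X f.
have [h [ph uniqh]] := prodP X (fun i => qrep (f i)).
exists (qcl R h); split=> [i|h' ph'] /=; first by rewrite qcmp_cl ph qrepK.
rewrite -(qrepK h'); apply: qcl_eq.
apply: (cprod prodP (g := fun i => cmp (p i) (qrep h'))) ph _ => // i.
have := ph' i; rewrite -{1}(qrepK h') /= qcmp_cl => <-.
exact: qrep_rel.
Qed.

Lemma quot_has_products : has_finite_products (quot_cat R).
Proof.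
move=> n Y; have [P [p prodP]] := th_prod Y.
by exists P, (fun i => qcl R (p i)); apply: quot_is_prod.
Qed.

Definition quot_theory : Theory := MkTheory quot_has_products.

Lemma quot_functor_preserves : preserves_products (quot_functor R).
Proof. by move=> n Y P p; apply: quot_is_prod. Qed.

Definition quot_mor : TheoryMor T quot_theory :=
  @MkTheoryMor T quot_theory (quot_functor R) quot_functor_preserves.

Lemma quot_functor_epi (D : Cat) (F G : Functor (quot_cat R) D) :
  fcomp F (quot_functor R) = fcomp G (quot_functor R) -> F = G.
Proof.
move=> FG; apply: functor_ext => [|x y K]; first exact: (congr1 (@fobj _ _) FG).
by rewrite -(qrepK K); apply: (fmap_JMeq FG).
Qed.

Section Lift.
Variables (B : Theory) (a : TheoryMor T B).
Hypothesis a_respects : forall x y (f g : hom T x y), R _ _ f g -> fmap a f = fmap a g.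

Definition quot_lift_map x y (K : qhom R x y) : hom B (a x) (a y) := fmap a (qrep K).

Lemma quot_lift_map_cl x y (f : hom T x y) : quot_lift_map (qcl R f) = fmap a f.
Proof. exact/a_respects/qrep_rel. Qed.

Lemma quot_lift_map_id x : quot_lift_map (qcl R (idm x)) = idm (a x).
Proof. by rewrite quot_lift_map_cl fmap_id. Qed.

Lemma quot_lift_map_cmp x y z (g : qhom R y z) (f : qhom R x y) :
  quot_lift_map (qcmp g f) = cmp (quot_lift_map g) (quot_lift_map f).
Proof. by rewrite /qcmp quot_lift_map_cl fmap_cmp. Qed.

Definition quot_lift : Functor (quot_cat R) B :=
  @MkFunctor (quot_cat R) B (fun x => a x) quot_lift_map quot_lift_map_id
    quot_lift_map_cmp.

Lemma quot_liftK : fcomp quot_lift (quot_functor R) = tfun a.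
Proof. by apply: functor_ext => // x y f /=; rewrite quot_lift_map_cl. Qed.

Lemma quot_lift_preserves : preserves_products quot_lift.
Proof.
apply: preserves_products_of_some => n Y.
have [P0 [p0 prodP0]] := th_prod Y.
exists P0, (fun i => qcl R (p0 i)); split; first exact: quot_is_prod.
rewrite /= (functional_extensionality_dep _ _ (fun i => quot_lift_map_cl (p0 i))).
exact: tpres prodP0.
Qed.

Definition quot_lift_mor : TheoryMor quot_theory B :=
  @MkTheoryMor quot_theory B quot_lift quot_lift_preserves.

Lemma quot_lift_morK : tcomp quot_lift_mor quot_mor = a.
Proof. exact/tfun_inj/quot_liftK. Qed.

End Lift.
End QuotientTheory.

Lemma fmap_prod_ext (T Q : Theory) (M : TheoryMor T Q) n (Y : 'I_n -> ob T) P p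
    X (h1 h2 : hom T X P) :
  is_prod Y P p -> (forall i, fmap M (cmp (p i) h1) = fmap M (cmp (p i) h2)) ->
  fmap M h1 = fmap M h2.
Proof.
move=> prodP eh.
have [h [_ uniq]] := tpres prodP (fun i => fmap M (cmp (p i) h1)).
have Mh1 i : cmp (fmap M (p i)) (fmap M h1) = fmap M (cmp (p i) h1).
  by rewrite fmap_cmp.
have Mh2 i : cmp (fmap M (p i)) (fmap M h2) = fmap M (cmp (p i) h1).
  by rewrite eh fmap_cmp.
by rewrite -(uniq _ Mh1) (uniq _ Mh2).
Qed.

Section Kernel.
Variables (T Q : Theory) (M : TheoryMor T Q).

Definition kernel_congruence : congruence T.
Proof.
refine (@MkCongruence T (fun x y f g => fmap M f = fmap M g) _ _ _ _ _).
- by [].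
- by move=> x y f g ->.
- by move=> x y f g h -> ->.
- by move=> x y z f f' g g' Mf Mg; rewrite !fmap_cmp Mf Mg.
- move=> n Y P p prodP X f g hf hg Mfg phf phg.
  by apply: fmap_prod_ext prodP _ => i; rewrite phf phg.
Defined.

Definition khom (x y : ob T) :=
  {fg : hom T x y * hom T x y | fmap M fg.1 = fmap M fg.2}.

Lemma khom_eq x y (k k' : khom x y) : sval k = sval k' -> k = k'.
Proof. by move=> e; apply: eq_sig_hprop => // ?; apply: proof_irrelevance. Qed.

Definition kcmp x y z (g : khom y z) (f : khom x y) : khom x z.
Proof.
exists (cmp (sval g).1 (sval f).1, cmp (sval g).2 (sval f).2).
by rewrite /= !fmap_cmp (svalP g) (svalP f).
Defined.

Definition kid x : khom x x := exist _ (idm x, idm x) erefl.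

Lemma kcmpA x y z w (h : khom z w) (g : khom y z) (f : khom x y) :
  kcmp (kcmp h g) f = kcmp h (kcmp g f).
Proof. by apply: khom_eq => /=; rewrite !cmpA. Qed.

Lemma kcmp1l x y (f : khom x y) : kcmp (kid y) f = f.
Proof. by apply: khom_eq => /=; rewrite !cmp1l; case: (sval f). Qed.

Lemma kcmp1r x y (f : khom x y) : kcmp f (kid x) = f.
Proof. by apply: khom_eq => /=; rewrite !cmp1r; case: (sval f). Qed.

Definition kernel_pair_cat : Cat := MkCat kcmpA kcmp1l kcmp1r.

Definition kdiag x y (f : hom T x y) : khom x y := exist _ (f, f) erefl.

Lemma kdiag_is_prod n (Y : 'I_n -> ob T) P p :
  is_prod Y P p -> is_prod (C := kernel_pair_cat) Y P (fun i => kdiag (p i)).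
Proof.
move=> prodP X f.
have [h1 [ph1 uniq1]] := prodP X (fun i => (sval (f i)).1).
have [h2 [ph2 uniq2]] := prodP X (fun i => (sval (f i)).2).
have Mh : fmap M h1 = fmap M h2.
  by apply: fmap_prod_ext prodP _ => i; rewrite ph1 ph2 (svalP (f i)).
exists (exist _ (h1, h2) Mh : khom X P); split=> [i|[[g1 g2] Mg] pg].
  by apply: khom_eq => /=; rewrite ph1 ph2; case: (sval (f i)).
apply: khom_eq; congr pair.
  by apply: uniq1 => i; rewrite -(pg i).
by apply: uniq2 => i; rewrite -(pg i).
Qed.

Lemma kernel_pair_has_products : has_finite_products kernel_pair_cat.
Proof.
move=> n Y; have [P [p prodP]] := th_prod Y.
by exists P, (fun i => kdiag (p i)); apply: kdiag_is_prod.
Qed.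

Definition kernel_pair : Theory := MkTheory kernel_pair_has_products.

Definition kproj_map (b : bool) x y (k : khom x y) : hom T x y :=
  if b then (sval k).1 else (sval k).2.

Lemma kproj_map_id b x : kproj_map b (kid x) = idm x.
Proof. by case: b. Qed.

Lemma kproj_map_cmp b x y z (g : khom y z) (f : khom x y) :
  kproj_map b (kcmp g f) = cmp (kproj_map b g) (kproj_map b f).
Proof. by case: b. Qed.

Definition kproj_functor (b : bool) : Functor kernel_pair_cat T :=
  @MkFunctor kernel_pair_cat T (fun x => x) (kproj_map b)
    (@kproj_map_id b) (@kproj_map_cmp b).

Lemma kproj_preserves b : preserves_products (kproj_functor b).
Proof.
apply: preserves_products_of_some => n Y; have [P0 [p0 prodP0]] := th_prod Y.
exists P0, (fun i => kdiag (p0 i)); split; first exact: kdiag_is_prod.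
by case: b.
Qed.

Definition kproj b : TheoryMor kernel_pair T :=
  @MkTheoryMor kernel_pair T (kproj_functor b) (@kproj_preserves b).

Lemma kdiag_cmp x y z (g : hom T y z) (f : hom T x y) :
  kdiag (cmp g f) = kcmp (kdiag g) (kdiag f).
Proof. exact: khom_eq. Qed.

Definition kdiag_functor : Functor T kernel_pair_cat :=
  @MkFunctor T kernel_pair_cat (fun x => x) kdiag (fun x => erefl) kdiag_cmp.

Lemma kdiag_preserves : preserves_products kdiag_functor.
Proof. by move=> n Y P p; apply: kdiag_is_prod. Qed.

Definition kdiag_mor : TheoryMor T kernel_pair :=
  @MkTheoryMor T kernel_pair kdiag_functor kdiag_preserves.

Lemma kprojK b : tcomp (kproj b) kdiag_mor = tid T.
Proof. by apply/tfun_inj/functor_ext => //; case: b. Qed.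

Lemma kernel_pair_reflexive : reflexive_pair (kproj true) (kproj false).
Proof. by exists kdiag_mor; rewrite !kprojK. Qed.

Lemma kernel_pair_lawvere : lawvere_equation (kproj true) (kproj false).
Proof. by exists T, kdiag_mor; rewrite !kprojK; split=> // y; exists y. Qed.

Lemma kernel_pair_coequalizes : tcomp M (kproj true) = tcomp M (kproj false).
Proof. by apply/tfun_inj/functor_ext => // x y k /=; rewrite (svalP k). Qed.

Lemma kernel_pair_respects (B : Theory) (a : TheoryMor T B) :
  tcomp a (kproj true) = tcomp a (kproj false) ->
  forall x y (f g : hom T x y), fmap M f = fmap M g -> fmap a f = fmap a g.
Proof.
move=> a_coeq x y f g Mfg.
exact: JMeq_eq (fmap_JMeq (congr1 (@tfun _ _) a_coeq) (exist _ (f, g) Mfg : khom x y)).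
Qed.

End Kernel.

Lemma lawvere_equation_fobj (T' T : Theory) (P Q : TheoryMor T' T) :
  lawvere_equation P Q -> forall y, P y = Q y.
Proof.
move=> [T'' [U [U_onto PU_QU]]] y; have [x <-] := U_onto y.
exact: (congr1 (fun F : TheoryMor T'' T => F x) PU_QU).
Qed.

Lemma kernel_qcl_JMeq (T Q : Theory) (M : TheoryMor T Q) x y x' y'
    (f : hom T x y) (f' : hom T x' y') :
  x = x' -> y = y' -> JMeq (fmap M f) (fmap M f') ->
  JMeq (qcl (kernel_congruence M) f) (qcl (kernel_congruence M) f').
Proof.
move=> ex ey; subst x' y' => Mff'.
by rewrite (@qcl_eq _ (kernel_congruence M) _ _ _ _ (JMeq_eq Mff')).
Qed.

Lemma kernel_quot_coequalizes (T' T Q : Theory) (M : TheoryMor T Q)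
    (P P' : TheoryMor T' T) :
  (forall y, P y = P' y) -> tcomp M P = tcomp M P' ->
  tcomp (quot_mor (kernel_congruence M)) P = tcomp (quot_mor (kernel_congruence M)) P'.
Proof.
move=> PP'_obj MP_MP'; apply/tfun_inj/functor_ext => [|x y f /=].
  exact: functional_extensionality.
by apply: kernel_qcl_JMeq => //; apply: (fmap_JMeq (congr1 (@tfun _ _) MP_MP')).
Qed.

Lemma general_cosolution_epi (A V B : Theory) (S : Cosystem A) (v : TheoryMor A V)
    (b b' : TheoryMor V B) :
  general_cosolution S v -> tcomp b v = tcomp b' v -> b = b'.
Proof.
move=> [v_cosol v_univ] bv_b'v.
have bv_cosol : cosolution S (tcomp b v) by move=> i; rewrite !tcompA v_cosol.
have [c [_ uniq]] := v_univ B _ bv_cosol.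
by rewrite -(uniq b) ?(uniq b').
Qed.

Definition kernel_quot_lift (T Q : Theory) (M : TheoryMor T Q) :
  Functor (quot_cat (kernel_congruence M)) Q :=
  quot_lift (R := kernel_congruence M) (a := M) (fun _ _ _ _ Mfg => Mfg).

Lemma lawvere_covariety_kernel_quot (T Q : Theory) (M : TheoryMor T Q) :
  lawvere_covariety M ->
  theory_iso (kernel_quot_lift M) /\
  tfun M = fcomp (kernel_quot_lift M) (quot_functor (kernel_congruence M)).
Proof.
move=> [S [S_lawvere M_gen]].
set R := kernel_congruence M.
pose N := quot_lift_mor (R := R) (a := M) (fun _ _ _ _ Mfg => Mfg).
have NC_M : tcomp N (quot_mor R) = M := quot_lift_morK _.
have C_cosol : cosolution S (quot_mor R).
  move=> i; apply: kernel_quot_coequalizes; last exact: M_gen.1.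
  exact: lawvere_equation_fobj.
have [G [C_GM _]] := M_gen.2 _ _ C_cosol.
have NG : tcomp N G = tid Q.
  by apply: general_cosolution_epi M_gen _; rewrite tcompA -C_GM NC_M tcomp_idl.
have GN : tcomp G N = tid (quot_theory R).
  apply/tfun_inj/quot_functor_epi.
  change (tfun (tcomp (tcomp G N) (quot_mor R)) = tfun (tcomp (tid _) (quot_mor R))).
  by rewrite tcompA NC_M -C_GM tcomp_idl.
split; last by rewrite -[RHS]/(tfun (tcomp N (quot_mor R))) NC_M.
split; first exact: tpres N.
exists (tfun G); split; first exact: tpres G.
by split; [exact: (congr1 (@tfun _ _) GN) | exact: (congr1 (@tfun _ _) NG)].
Qed.

Section QuotientIso.
Variables (T Q : Theory) (M : TheoryMor T Q) (R : congruence T).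
Variable N : Functor (quot_cat R) Q.
Hypotheses (N_iso : theory_iso N) (M_eq : tfun M = fcomp N (quot_functor R)).

Lemma quot_iso_respects x y (f g : hom T x y) : R _ _ f g -> fmap M f = fmap M g.
Proof.
move=> Rfg; apply: JMeq_eq.
apply: JMeq_trans (fmap_JMeq M_eq f) _; apply: JMeq_sym.
by apply: JMeq_trans (fmap_JMeq M_eq g) _; rewrite /= (qcl_eq Rfg).
Qed.

Lemma quot_iso_epi (B : Theory) (b b' : TheoryMor Q B) :
  tcomp b M = tcomp b' M -> b = b'.
Proof.
move=> bM_b'M; have [_ [G [_ [_ NG]]]] := N_iso.
have bN : fcomp b N = fcomp b' N.
  apply: quot_functor_epi; rewrite !fcompA -M_eq.
  exact: (congr1 (@tfun _ _) bM_b'M).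
apply: tfun_inj.
by rewrite -(fcomp_idr b) -(fcomp_idr b') -NG -!fcompA bN.
Qed.

Lemma quot_iso_factor (B : Theory) (a : TheoryMor T B)
    (a_respects : forall x y (f g : hom T x y), R _ _ f g -> fmap a f = fmap a g) :
  exists a' : TheoryMor Q B, a = tcomp a' M.
Proof.
have [_ [G [G_pres [GN _]]]] := N_iso.
exists (tcomp (quot_lift_mor a_respects) (@MkTheoryMor Q (quot_theory R) G G_pres)).
apply: tfun_inj.
rewrite [RHS]/= M_eq -fcompA (fcompA (quot_lift _)) GN fcomp_idr.
by rewrite quot_liftK.
Qed.

Lemma quot_iso_coequalizer : coequalizer (kproj M true) (kproj M false) M.
Proof.
split=> [|B a a_coeq]; first exact: kernel_pair_coequalizes.
have a_respects x y (f g : hom T x y) : R _ _ f g -> fmap a f = fmap a g.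
  by move=> /quot_iso_respects; apply: kernel_pair_respects.
have [a' a_a'M] := quot_iso_factor a_respects.
exists a'; split=> // a'' a_a''M.
by apply: quot_iso_epi; rewrite -a_a'M.
Qed.

End QuotientIso.

Lemma coequalizer_lawvere_covariety (T' T V : Theory) (P P' : TheoryMor T' T)
    (M : TheoryMor T V) :
  lawvere_equation P P' -> coequalizer P P' M -> lawvere_covariety M.
Proof.
move=> PP'_lawvere [MP_MP' M_univ].
exists (@MkCosystem T unit (inhabits tt) (fun _ => T') (fun _ => P) (fun _ => P')).
by split=> //; split=> // B a a_cosol; apply: M_univ (a_cosol tt).
Qed.

Theorem mainTheorem2 (T Q : Theory) (M : TheoryMor T Q) :
  (lawvere_covariety M <->
   exists (R : congruence T) (N : Functor (quot_cat R) Q),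
     theory_iso N /\ tfun M = fcomp N (quot_functor R)) /\
  ((exists (R : congruence T) (N : Functor (quot_cat R) Q),
     theory_iso N /\ tfun M = fcomp N (quot_functor R)) <->
   exists (T' : Theory) (P P' : TheoryMor T' T),
     reflexive_pair P P' /\ lawvere_equation P P' /\ coequalizer P P' M).
Proof.
have one_two : lawvere_covariety M -> exists R N, theory_iso N /\
    tfun M = fcomp N (quot_functor R).
  by move=> /lawvere_covariety_kernel_quot; exists (kernel_congruence M), (kernel_quot_lift M).
have two_three : (exists R N, theory_iso N /\ tfun M = fcomp N (quot_functor R)) ->
    coequalizer (kproj M true) (kproj M false) M.
  by move=> [R [N [N_iso M_eq]]]; apply: quot_iso_coequalizer N_iso M_eq.
split; split.
- exact: one_two.
- move=> /two_three; apply: coequalizer_lawvere_covariety.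
  exact: kernel_pair_lawvere.
- move=> /two_three M_coeq; exists (kernel_pair M), (kproj M true), (kproj M false).
  by split; [exact: kernel_pair_reflexive | split; [exact: kernel_pair_lawvere |]].
- move=> [T' [P [P' [_ [PP'_lawvere M_coeq]]]]].
  exact/one_two/(coequalizer_lawvere_covariety PP'_lawvere M_coeq).
Qed.
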